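(* Let $t,d\in\mathbb{C}[[z]]$ with $t^2-4d$ having a simple zero at $z=0$, and let $\tilde X$ be the corresponding spectral curve. Then all objects of the groupoid $\widetilde{\mathrm{Conn}}(\tilde X)$ are isomorphic.
   Context: $\tilde X=\operatorname{Spf}\mathbb{C}[[\tilde z]]$ is the spectral curve $\xi^2-t(z)\xi+d(z)=0$ in $T^*\operatorname{Spf}\mathbb{C}[[z]]=\operatorname{Spf}\mathbb{C}[\xi][[z]]$, with coordinate $\tilde z=\sqrt{t^2-4d}$ and canonical $1$-form $\mu=\xi\,dz|_{\tilde X}$. $\widetilde{\mathrm{Conn}}(\tilde X)$ is the groupoid of pairs $(l,\delta)$ with $l$ a free rank-1 $\mathbb{C}[[\tilde z,\lambda]]$-module and $\delta:l\to\tilde z^{-1}l\,d\tilde z$ a $\mathbb{C}[[\lambda]]$-linear map with $\delta(fs)=f\delta s+\lambda s\,df$, residue $-\lambda/2$, and reduction mod $\lambda$ equal to $\mu$; morphisms are isomorphisms compatible with $\delta$. *)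

From mathcomp Require Import all_boot all_order all_algebra.
From mathcomp Require Import complex reals Rstruct.
Set Implicit Arguments. Unset Strict Implicit. Unset Printing Implicit Defensive.
Import Order.TTheory GRing.Theory Num.Theory.
Local Open Scope ring_scope.

Definition C : numClosedFieldType := complex Rdefinitions.R.

(** * One-variable formal power series  C[[x]] : coefficient sequences. *)
Definition ps1 := nat -> C.

Definition ps1_add (f g : ps1) : ps1 := fun n => f n + g n.
Definition ps1_scale (c : C) (f : ps1) : ps1 := fun n => c * f n.
Definition ps1_mul (f g : ps1) : ps1 :=
  fun n => \sum_(k < n.+1) f k * g (n - k)%N.
Definition ps1_one : ps1 := fun n => if n == 0%N then 1 else 0.
Definition ps1_X : ps1 := fun n => if n == 1%N then 1 else 0.
Fixpoint ps1_pow (f : ps1) (k : nat) : ps1 :=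
  match k with 0 => ps1_one | k'.+1 => ps1_mul f (ps1_pow f k') end.
(** composition f(g(x)), meaningful when g 0 = 0 (then only k <= n contribute) *)
Definition ps1_comp (f g : ps1) : ps1 :=
  fun n => \sum_(k < n.+1) f k * ps1_pow g k n.
Definition ps1_deriv (f : ps1) : ps1 := fun n => (n.+1)%:R * f n.+1.

(** * Two-variable formal power series  C[[zt, lambda]]:
    [F i j] is the coefficient of  zt^i lambda^j. *)
Definition ps2 := nat -> nat -> C.

Definition ps2_add (F G : ps2) : ps2 := fun i j => F i j + G i j.
Definition ps2_mul (F G : ps2) : ps2 :=
  fun i j => \sum_(a < i.+1) \sum_(b < j.+1) F a b * G (i - a)%N (j - b)%N.
Definition ps2_one : ps2 := fun i j => if (i == 0%N) && (j == 0%N) then 1 else 0.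
Definition ps2_lam : ps2 := fun i j => if (i == 0%N) && (j == 1%N) then 1 else 0.
Definition ps2_zt : ps2 := fun i j => if (i == 1%N) && (j == 0%N) then 1 else 0.
Definition ps2_const (c : C) : ps2 := fun i j => if (i == 0%N) && (j == 0%N) then c else 0.
Definition ps2_of_zt (f : ps1) : ps2 := fun i j => if j == 0%N then f i else 0.
Definition ps2_of_lam (c : ps1) : ps2 := fun i j => if i == 0%N then c j else 0.
Definition ps2_dzt (F : ps2) : ps2 := fun i j => (i.+1)%:R * F i.+1 j.
Definition ps2_mod_lam (F : ps2) : ps1 := fun i => F i 0%N.
Definition ps2_mod_zt (F : ps2) : ps1 := fun j => F 0%N j.

(** The spectral curve Xt = Spf C[[zt]] maps to Spf C[[z]]
    by z = Z(zt), where Z(0) = 0 and zt^2 = t(Z)^2 - 4 d(Z), i.e.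
    zt = sqrt(t^2 - 4d); on Xt the fibre coordinate is xi = (t(Z) + zt)/2
    (so that zt = 2 xi - t and xi^2 - t xi + d = 0). *)
Definition simple_zero (f : ps1) : Prop := f 0%N = 0 /\ f 1%N != 0.

Definition discr (t d : ps1) : ps1 :=
  ps1_add (ps1_mul t t) (ps1_scale (-4) d).

Definition spectral_param (t d Z : ps1) : Prop :=
  Z 0%N = 0 /\ discr (ps1_comp t Z) (ps1_comp d Z) = ps1_mul ps1_X ps1_X.

Definition xi_on (t Z : ps1) : ps1 := ps1_scale (2^-1) (ps1_add (ps1_comp t Z) ps1_X).

(** the canonical 1-form mu = xi dz |_Xt = m(zt) dzt, m = xi * dZ/dzt *)
Definition mu_coef (t Z : ps1) : ps1 := ps1_mul (xi_on t Z) (ps1_deriv Z).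

(** A free rank-1 C[[zt,lambda]]-module l is trivialised as l = C[[zt,lambda]];
    an element  zt^{-1} g dzt  of  zt^{-1} l dzt  is encoded by  g in l.
    Thus a map  delta : l -> zt^{-1} l dzt  is encoded by  D : ps2 -> ps2
    with  delta s = zt^{-1} (D s) dzt. *)
Definition lambda_conn (t Z : ps1) (D : ps2 -> ps2) : Prop :=
  (forall s s', D (ps2_add s s') = ps2_add (D s) (D s')) /\
  (forall (c : ps1) s, D (ps2_mul (ps2_of_lam c) s) = ps2_mul (ps2_of_lam c) (D s)) /\
  (* Leibniz rule  delta(f s) = f delta s + lambda s df,
     in the encoding:  D(f s) = f D(s) + lambda s zt (df/dzt) *)
  (forall f s, D (ps2_mul f s) =
     ps2_add (ps2_mul f (D s))
             (ps2_mul ps2_lam (ps2_mul s (ps2_mul ps2_zt (ps2_dzt f))))) /\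
  (* residue at zt = 0 is  -lambda/2 :  (D s) mod zt = (-lambda/2) (s mod zt) *)
  (forall s, ps2_mod_zt (D s) =
     ps2_mod_zt (ps2_mul (ps2_mul (ps2_const (- 2^-1)) ps2_lam) s)) /\
  (* reduction mod lambda equals mu:  (delta s) mod lambda = mu * (s mod lambda),
     i.e. (D s) mod lambda = zt * m(zt) * (s mod lambda) *)
  (forall s, ps2_mod_lam (D s) =
     ps1_mul (ps1_mul ps1_X (mu_coef t Z)) (ps2_mod_lam s)).

(** Morphisms: C[[zt,lambda]]-module isomorphisms compatible with delta
    (the induced map on zt^{-1} l dzt is phi applied to the encoding). *)
Definition conn_iso (D1 D2 : ps2 -> ps2) : Prop :=
  exists phi : ps2 -> ps2,
    bijective phi /\
    (forall s s', phi (ps2_add s s') = ps2_add (phi s) (phi s')) /\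
    (forall f s, phi (ps2_mul f s) = ps2_mul f (phi s)) /\
    (forall s, D2 (phi s) = phi (D1 s)).

(* By the Leibniz rule a lambda-connection is determined by g := delta(1):
   in the encoding, D f = f g + lambda zt f'.  For two connections, g1 and g2
   agree modulo lambda (both reduce to mu) and modulo zt (both have residue
   -lambda/2), so g1 = g2 + lambda zt k.  If u is a unit with u' = u k, then
   s |-> s u intertwines D1 and D2.  Such a u exists in C[[zt, lambda]]: the
   recursion (i+1) u_(i+1) = (u k)_i determines its zt-coefficients row by row
   in characteristic 0, starting from u_0 = 1. *)

From mathcomp Require Import all_boot all_order all_algebra.
From Stdlib Require Import FunctionalExtensionality Ring_theory Ring.
Import Order.TTheory GRing.Theory Num.Theory.
Local Open Scope ring_scope.

Lemma ps2_ext (F G : ps2) : (forall i j, F i j = G i j) -> F = G.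
Proof.
by move=> FG; do 2!apply: functional_extensionality => ?; apply: FG.
Qed.

Lemma sum_antidiag_swap (h : nat -> nat -> C) n :
  \sum_(a < n.+1) h a (n - a)%N = \sum_(a < n.+1) h (n - a)%N a.
Proof.
rewrite (reindex_inj rev_ord_inj); apply: eq_bigr => a _ /=.
by rewrite subSS subKn // -ltnS.
Qed.

Lemma sum_triangle_exchange (K : nat -> nat -> nat -> C) n :
  \sum_(a < n.+1) \sum_(c < a.+1) K c (a - c)%N (n - a)%N =
  \sum_(c < n.+1) \sum_(e < (n - c).+1) K c e (n - c - e)%N.
Proof.
transitivity (\sum_(a < n.+1) \sum_(c < n.+1 | (c <= a)%N) K c (a - c)%N (n - a)%N).
  by apply: eq_bigr => a _; rewrite (big_ord_narrow_leq (leq_ord a)).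
rewrite (exchange_big_dep predT) //=; apply: eq_bigr => c _.
rewrite (eq_bigl (fun a : 'I_n.+1 => predT a && (c <= a)%N)) //.
rewrite -(big_geq_mkord c n.+1 predT (fun a => K c (a - c)%N (n - a)%N)).
rewrite -{1}(add0n c) big_addn subSn ?leq_ord // big_mkord.
by apply: eq_bigr => e _; rewrite addnK subnDA subnAC.
Qed.

Lemma ps2_mul1l (F : ps2) : ps2_mul ps2_one F = F.
Proof.
apply: ps2_ext => i j; rewrite /ps2_mul big_ord_recl [X in _ + X]big1 ?addr0.
  rewrite big_ord_recl [X in _ + X]big1 ?addr0 => [|b _]; last by rewrite mul0r.
  by rewrite /ps2_one /= mul1r !subn0.
by move=> a _; apply: big1 => b _; rewrite mul0r.
Qed.

Lemma ps2_mulC (F G : ps2) : ps2_mul F G = ps2_mul G F.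
Proof.
apply: ps2_ext => i j; rewrite /ps2_mul.
rewrite (sum_antidiag_swap (fun a a' => \sum_(b < j.+1) F a b * G a' (j - b)%N)).
apply: eq_bigr => a _; rewrite (sum_antidiag_swap (fun b b' => F (i - a)%N b * G a b')).
by apply: eq_bigr => b _; rewrite mulrC.
Qed.

Lemma ps2_mulA (F G H : ps2) :
  ps2_mul F (ps2_mul G H) = ps2_mul (ps2_mul F G) H.
Proof.
pose T i j c x e y := F c e * G x y * H (i - c - x)%N (j - e - y)%N.
apply: ps2_ext => i j; rewrite /ps2_mul.
transitivity (\sum_(c < i.+1) \sum_(x < (i - c).+1)
              \sum_(e < j.+1) \sum_(y < (j - e).+1) T i j c x e y).
  apply: eq_bigr => c _; under eq_bigr => e _ do rewrite mulr_sumr.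
  rewrite exchange_big; apply: eq_bigr => x _; apply: eq_bigr => e _.
  by rewrite mulr_sumr; apply: eq_bigr => y _; rewrite mulrA.
symmetry; transitivity (\sum_(a < i.+1) \sum_(c < a.+1) \sum_(b < j.+1)
    \sum_(e < b.+1) F c e * G (a - c)%N (b - e)%N * H (i - a)%N (j - b)%N).
  apply: eq_bigr => a _; under eq_bigr => b _ do rewrite mulr_suml.
  rewrite exchange_big; apply: eq_bigr => c _; apply: eq_bigr => b _.
  by rewrite mulr_suml.
rewrite (sum_triangle_exchange (fun c x y => \sum_(b < j.+1) \sum_(e < b.+1)
   F c e * G x (b - e)%N * H y (j - b)%N)).
apply: eq_bigr => c _; apply: eq_bigr => x _.
exact: (sum_triangle_exchange (fun e y z => F c e * G x y * H (i - c - x)%N z)).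
Qed.

Lemma ps2_mulDl (F G H : ps2) :
  ps2_mul (ps2_add F G) H = ps2_add (ps2_mul F H) (ps2_mul G H).
Proof.
apply: ps2_ext => i j; rewrite /ps2_mul /ps2_add -big_split.
by apply: eq_bigr => a _; rewrite -big_split; apply: eq_bigr => b _; rewrite mulrDl.
Qed.

Definition ps2_zero : ps2 := fun _ _ => 0.
Definition ps2_opp (F : ps2) : ps2 := fun i j => - F i j.
Definition ps2_sub (F G : ps2) : ps2 := ps2_add F (ps2_opp G).

Lemma ps2_ring_theory :
  ring_theory ps2_zero ps2_one ps2_add ps2_mul ps2_sub ps2_opp (@eq ps2).
Proof.
split=> //.
- by move=> F; apply: ps2_ext => i j; rewrite /ps2_add add0r.
- by move=> F G; apply: ps2_ext => i j; rewrite /ps2_add addrC.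
- by move=> F G H; apply: ps2_ext => i j; rewrite /ps2_add addrA.
- exact: ps2_mul1l.
- exact: ps2_mulC.
- exact: ps2_mulA.
- exact: ps2_mulDl.
- by move=> F; apply: ps2_ext => i j; rewrite /ps2_add subrr.
Qed.

Add Ring ps2_ring : ps2_ring_theory.

Lemma ps2_mul_lamE (F : ps2) i j :
  ps2_mul ps2_lam F i j = if j is j'.+1 then F i j' else 0.
Proof.
rewrite /ps2_mul big_ord_recl [X in _ + X]big1 ?addr0 => [|a _]; last first.
  by apply: big1 => b _; rewrite /ps2_lam /= mul0r.
case: j => [|j]; first by rewrite big_ord_recl big_ord0 /ps2_lam /= mul0r addr0.
rewrite !big_ord_recl [X in _ + (_ + X)]big1 => [|b _]; last by rewrite /ps2_lam /= mul0r.
by rewrite /ps2_lam /= mul0r mul1r add0r addr0 subn0 subSS subn0.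
Qed.

Lemma ps2_mul_ztE (F : ps2) i j :
  ps2_mul ps2_zt F i j = if i is i'.+1 then F i' j else 0.
Proof.
rewrite /ps2_mul big_ord_recl big1 ?add0r => [|b _]; last by rewrite /ps2_zt /= mul0r.
case: i => [|i]; first by rewrite big_ord0.
rewrite big_ord_recl [X in _ + X]big1 ?addr0 => [|a _]; last first.
  by apply: big1 => b _; rewrite /ps2_zt /= mul0r.
rewrite big_ord_recl big1 ?addr0 => [|b _]; last by rewrite /ps2_zt /= mul0r.
by rewrite /ps2_zt /= mul1r subn0 subSS subn0.
Qed.

Lemma ps2_lam_zt_factor (F : ps2) :
  (forall i, F i 0%N = 0) -> (forall j, F 0%N j = 0) ->
  F = ps2_mul ps2_lam (ps2_mul ps2_zt (fun i j => F i.+1 j.+1)).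
Proof.
move=> F_i0 F_0j; apply: ps2_ext => i j; rewrite ps2_mul_lamE.
case: j => [|j]; first exact: F_i0.
by rewrite ps2_mul_ztE; case: i.
Qed.

Definition row_causal (step : ps2 -> ps2) : Prop :=
  forall (g g' : ps2) i, (forall a j, (a < i)%N -> g a j = g' a j) ->
  forall j, step g i j = step g' i j.

Section CausalRecursion.

Variable step : ps2 -> ps2.
Hypothesis step_causal : row_causal step.

Let approx n : ps2 := iter n.+1 step ps2_zero.

Lemma approx_succ n a j : (a <= n)%N -> approx n a j = approx n.+1 a j.
Proof.
elim: n a j => [|n IHn] a j; first by rewrite leqn0 => /eqP ->; apply: step_causal.
move=> le_an; rewrite /approx iterS [in RHS]iterS; apply: step_causal => b j' lt_ba.
by apply: IHn; rewrite -ltnS (leq_trans lt_ba).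
Qed.

Lemma approx_stable n m a j : (a <= n)%N -> approx n a j = approx (n + m) a j.
Proof.
move=> le_an; elim: m => [|m IHm]; first by rewrite addn0.
by rewrite IHm addnS approx_succ // (leq_trans le_an) ?leq_addr.
Qed.

(* The i-th iterate is already exact on rows 0..i (approx_succ), so the
   diagonal is a fixed point. *)
Definition causal_fix : ps2 := fun i j => approx i i j.

Lemma causal_fixE i j : causal_fix i j = step causal_fix i j.
Proof.
rewrite /causal_fix; case: i => [|i]; first exact: step_causal.
rewrite /approx iterS; apply: step_causal => a j' le_ai.
change (approx i a j' = approx a a j').
by rewrite -(subnKC (le_ai : (a <= i)%N)) -approx_stable.
Qed.

End CausalRecursion.

Definition ode_step (k g : ps2) : ps2 := fun i j =>
  if i is i'.+1 then i'.+1%:R^-1 * ps2_mul g k i' j else ps2_one 0 j.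

Lemma ode_step_causal k : row_causal (ode_step k).
Proof.
move=> g g' [|i] // gg' j; rewrite /ode_step; congr (_ * _).
by apply: eq_bigr => a _; apply: eq_bigr => b _; rewrite gg'.
Qed.

Definition ps2_ode_sol (k : ps2) : ps2 := causal_fix (ode_step k).

Lemma ps2_ode_sol0 k j : ps2_ode_sol k 0 j = ps2_one 0 j.
Proof. by rewrite /ps2_ode_sol causal_fixE //; apply: ode_step_causal. Qed.

Lemma ps2_ode_solP k : ps2_dzt (ps2_ode_sol k) = ps2_mul (ps2_ode_sol k) k.
Proof.
apply: ps2_ext => i j; rewrite /ps2_dzt {1}/ps2_ode_sol causal_fixE /=; last first.
  exact: ode_step_causal.
by rewrite mulrA divff ?mul1r // pnatr_eq0.
Qed.

Definition inv_step (u g : ps2) : ps2 := fun i j =>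
  ps2_one i j - \sum_(a < i) \sum_(b < j.+1) g a b * u (i - a)%N (j - b)%N.

Lemma inv_step_causal u : row_causal (inv_step u).
Proof.
move=> g g' i gg' j; congr (_ - _).
by apply: eq_bigr => a _; apply: eq_bigr => b _; rewrite gg'.
Qed.

Definition ps2_inv (u : ps2) : ps2 := causal_fix (inv_step u).

Lemma ps2_mulVr {u : ps2} :
  (forall j, u 0%N j = ps2_one 0 j) -> ps2_mul (ps2_inv u) u = ps2_one.
Proof.
move=> u0; apply: ps2_ext => i j.
have last_row (w : nat -> C) : \sum_(b < j.+1) w b * u 0%N (j - b)%N = w j.
  rewrite big_ord_recr big1 => [|b _]; first by rewrite /= add0r subnn u0 mulr1.
  by rewrite u0 /ps2_one /= subn_eq0 leqNgt ltn_ord mulr0.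
rewrite /ps2_mul big_ord_recr /= subnn last_row.
rewrite {2}/ps2_inv causal_fixE; last exact: inv_step_causal.
by rewrite /inv_step addrC subrK.
Qed.

Lemma conn_iso_of_gauge {D1 D2 : ps2 -> ps2} {v u : ps2} :
  ps2_mul v u = ps2_one ->
  (forall s, D2 (ps2_mul s u) = ps2_mul (D1 s) u) -> conn_iso D1 D2.
Proof.
move=> uVu gauge; exists (ps2_mul^~ u); split.
  exists (ps2_mul^~ v) => s /=.
  - by rewrite -ps2_mulA (ps2_mulC u) uVu; ring.
  - by rewrite -ps2_mulA uVu; ring.
split; first by move=> s s'; ring.
by split=> [f s|//]; ring.
Qed.

Lemma lambda_conn_one {t Z : ps1} {D : ps2 -> ps2} : lambda_conn t Z D -> forall f,
  D f = ps2_add (ps2_mul f (D ps2_one)) (ps2_mul ps2_lam (ps2_mul ps2_zt (ps2_dzt f))).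
Proof.
move=> [_ [_ [leibniz _]]] f.
transitivity (D (ps2_mul f ps2_one)); first by congr D; ring.
by rewrite leibniz; ring.
Qed.

Lemma lambda_conn_one_diff {t Z : ps1} {D1 D2 : ps2 -> ps2} :
  lambda_conn t Z D1 -> lambda_conn t Z D2 ->
  exists k, D1 ps2_one = ps2_add (D2 ps2_one) (ps2_mul ps2_lam (ps2_mul ps2_zt k)).
Proof.
move=> [_ [_ [_ [res1 red1]]]] [_ [_ [_ [res2 red2]]]].
set F := ps2_sub (D1 ps2_one) (D2 ps2_one).
have F_i0 i : F i 0%N = 0.
  have red12 : D1 ps2_one i 0%N = D2 ps2_one i 0%N.
    by have := congr1 (fun f : ps1 => f i) (etrans (red1 ps2_one) (esym (red2 ps2_one))).
  by rewrite /F /ps2_sub /ps2_add /ps2_opp red12 subrr.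
have F_0j j : F 0%N j = 0.
  have res12 : D1 ps2_one 0%N j = D2 ps2_one 0%N j.
    by have := congr1 (fun f : ps1 => f j) (etrans (res1 ps2_one) (esym (res2 ps2_one))).
  by rewrite /F /ps2_sub /ps2_add /ps2_opp res12 subrr.
exists (fun i j => F i.+1 j.+1); rewrite -(ps2_lam_zt_factor _ F_i0 F_0j) /F; ring.
Qed.

Lemma lambda_conn_gauge {t Z : ps1} {D1 D2 : ps2 -> ps2} {k u : ps2} :
  lambda_conn t Z D1 -> lambda_conn t Z D2 ->
  D1 ps2_one = ps2_add (D2 ps2_one) (ps2_mul ps2_lam (ps2_mul ps2_zt k)) ->
  ps2_dzt u = ps2_mul u k ->
  forall s, D2 (ps2_mul s u) = ps2_mul (D1 s) u.
Proof.
move=> D1conn D2conn D12 u_ode s.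
have [_ [_ [leibniz2 _]]] := D2conn.
rewrite leibniz2 (lambda_conn_one D2conn u) u_ode (lambda_conn_one D1conn s) D12.
ring.
Qed.

Theorem lemma4p10 (t d Z : ps1) :
  simple_zero (discr t d) ->
  spectral_param t d Z ->
  forall D1 D2 : ps2 -> ps2,
    lambda_conn t Z D1 -> lambda_conn t Z D2 -> conn_iso D1 D2.
Proof.
move=> _ _ D1 D2 D1conn D2conn.
have [k D12] := lambda_conn_one_diff D1conn D2conn.
apply: (conn_iso_of_gauge (ps2_mulVr (ps2_ode_sol0 k))).
exact: lambda_conn_gauge D1conn D2conn D12 (ps2_ode_solP k).
Qed.
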